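(* Let $F$ be a finite field with $q=|F|$. Let $k,m,n\in\mathbb{N}$ with $k\le m\le n+1$, and fix $a\in F^k$. Then the number of $x\in F^{m+n+1}$ with $(x_0,\ldots,x_{k-1})=a$ and $\operatorname{rank}(H_{m,n}(x))\le m$ is $q^{2m-k}$.
   Context: $\mathbb{N}=\{0,1,2,\ldots\}$. For $x=(x_0,\ldots,x_N)\in F^{N+1}$ and integers $p,p'\ge -1$ with $p+p'\le N$, $H_{p,p'}(x)=(x_{i+j})_{0\le i\le p,\,0\le j\le p'}$. *)

From HB Require Import structures.
From mathcomp Require Import all_boot all_order all_algebra.
Set Implicit Arguments. Unset Strict Implicit. Unset Printing Implicit Defensive.
Import GRing.Theory.
Local Open Scope ring_scope.

(* Hankel matrix H_{p,p'}(x) = (x_{i+j})_{0<=i<=p, 0<=j<=p'} for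
   x = (x_0,...,x_N) with p + p' <= N (here specialised to N = p + p',
   the only case the statement uses; indices i+j <= p+p' so inord is exact). *)
Definition hankel (F : fieldType) (p p' : nat) (x : 'I_(p + p').+1 -> F)
  : 'M[F]_(p.+1, p'.+1) :=
  \matrix_(i < p.+1, j < p'.+1) x (inord (i + j)).

From mathcomp Require Import all_boot all_order all_algebra.
From mathcomp Require Import zify boolp.
Import GRing.Theory.
Local Open Scope ring_scope.

(* Write X = sum_i x_i t^i and N = m + n + 1.  A nonzero row vector c with
   c *m H_(m,n)(x) = 0 is the same as a nonzero polynomial C (c read
   backwards) of size <= m + 1 such that the coefficients m, ..., m + n of
   C * X vanish.  Hence rank H_(m,n)(x) <= m iff X admits a Padé relation
   C * X = P mod t^N of type (m + 1, m): C != 0, size C <= m + 1, size P <= m.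

   We count, more generally, the sequences of length N extending a prefix p
   that admit a relation of type (a, b): there are q^(a+b-1-|p|) of them when
   0 < a, a + b <= N + 1 and |p| <= b.  The proof is by induction on N, using
   three transformations of relations: when a <= b the constant term of X is
   irrelevant, a leading zero term can be shifted away (lowering b and N), and
   when x_0 != 0 inverting X modulo t^N swaps a and b.  Inversion acts
   triangularly on coefficient sequences, so it is compatible with counting
   extensions of prefixes.  The theorem is the case (a, b) = (m + 1, m) with
   the prefix (a_0, ..., a_(k-1)). *)

Section PadeRelations.
Context {F : fieldType}.
Implicit Types (A B C D P X Y Z : {poly F}) (c : F).

Definition eqXn (N : nat) A B := forall i, (i < N)%N -> A`_i = B`_i.

Lemma eqXn_sym {N A B} : eqXn N A B -> eqXn N B A.
Proof. by move=> h i hi; rewrite h. Qed.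

Lemma eqXn_trans {N A B C} : eqXn N A B -> eqXn N B C -> eqXn N A C.
Proof. by move=> h1 h2 i hi; rewrite h1 // h2. Qed.

Lemma eqXn_le {N M A B} : (M <= N)%N -> eqXn N A B -> eqXn M A B.
Proof. by move=> hMN h i hi; apply: h; apply: leq_trans hMN. Qed.

Lemma eqXn_mulr {N A B} D : eqXn N A B -> eqXn N (A * D) (B * D).
Proof.
move=> h i hi; rewrite !coefM; apply: eq_bigr => j _; rewrite h //.
by apply: leq_ltn_trans hi; rewrite -ltnS.
Qed.

Lemma eqXn_mull {N A B} D : eqXn N A B -> eqXn N (D * A) (D * B).
Proof. by move=> h; rewrite ![D * _]mulrC; apply: eqXn_mulr. Qed.

Lemma eqXn0_small {N C} : (size C <= N)%N -> eqXn N C 0 -> C = 0.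
Proof.
move=> hs h; apply/polyP => i; rewrite coef0.
case: (ltnP i N) => hi; first by rewrite h // coef0.
by rewrite nth_default // (leq_trans hs).
Qed.

Lemma eqXn_inv_uniq {N} X {Z Z'} :
  eqXn N (X * Z) 1 -> eqXn N (X * Z') 1 -> eqXn N Z Z'.
Proof.
move=> h h'.
have e1 := eqXn_mull Z h'; rewrite mulr1 mulrA [Z * X]mulrC in e1.
have e2 := eqXn_mulr Z' h; rewrite mul1r in e2.
exact: eqXn_trans (eqXn_sym e1) e2.
Qed.

Definition pade (a b N : nat) X : Prop :=
  exists C P, [/\ C != 0, (size C <= a)%N, (size P <= b)%N & eqXn N (C * X) P].

Lemma pade_mulX a b N Y : (0 < N)%N ->
  pade a b N (Y * 'X) <-> pade a b.-1 N.-1 Y.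
Proof.
move=> hN; split=> -[C [P [nzC sC sP e]]].
- exists C, (drop_poly 1 P); split => //.
    by rewrite size_drop_poly subn1 -!subn1 leq_sub2r.
  move=> i hi; rewrite coef_drop_poly addn1 -e ?mulrA ?coefMX //.
  by rewrite -(prednK hN).
- exists C, (P * 'X); split => //.
    have [->|nzP] := eqVneq P 0; first by rewrite mul0r size_poly0.
    by rewrite size_mulX //; move: sP; rewrite -size_poly_gt0 in nzP; lia.
  move=> i hi; rewrite mulrA !coefMX; case: i hi => [|i] //= hi.
  by apply: e; rewrite -ltnS (prednK hN).
Qed.

Lemma pade_addC1 {a b N X} c : (a <= b)%N -> pade a b N X -> pade a b N (X + c%:P).
Proof.
move=> hab [C [P [nzC sC sP e]]]; exists C, (P + c *: C); split => //.
  apply: leq_trans (size_polyD _ _) _; rewrite geq_max sP /=.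
  exact: leq_trans (size_scale_leq _ _) (leq_trans sC hab).
by move=> i hi; rewrite mulrDr !coefD e // mulrC mul_polyC.
Qed.

Lemma pade_addC a b N X c : (a <= b)%N -> pade a b N (X + c%:P) <-> pade a b N X.
Proof.
move=> hab; split; last exact: pade_addC1.
by move=> /(pade_addC1 (- c) hab); rewrite -addrA -polyCD subrr addr0.
Qed.

(* If Z inverts X modulo t^N, relations of type (a, b) for X are relations of
   type (b, a) for Z: C * X = P gives P * Z = C. *)
Lemma pade_inv1 a b N X Z : (a <= N)%N -> eqXn N (X * Z) 1 ->
  pade a b N X -> pade b a N Z.
Proof.
move=> haN hXZ [C [P [nzC sC sP e]]].
have hC : eqXn N (P * Z) C.
  apply: eqXn_trans (eqXn_sym (eqXn_mulr Z e)) _.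
  by rewrite -mulrA -[C in eqXn _ _ C]mulr1; apply: eqXn_mull.
exists P, C; split => //; apply/eqP => P0; move/eqP: nzC; apply.
apply: eqXn0_small (leq_trans sC haN) _.
by apply: eqXn_trans (eqXn_sym hC) _; rewrite P0 mul0r.
Qed.

Lemma pade_inv a b N X Z : (a <= N)%N -> (b <= N)%N -> eqXn N (X * Z) 1 ->
  pade a b N X <-> pade b a N Z.
Proof.
move=> ha hb h; split; first exact: pade_inv1.
by apply: pade_inv1 => //; rewrite mulrC.
Qed.

Lemma pade_full N X : pade N.+1 0 N X.
Proof.
exists 'X^N, 0; split.
- by rewrite -size_poly_eq0 size_polyXn.
- by rewrite size_polyXn.
- by rewrite size_poly0.
- by move=> i hi; rewrite coefXnM hi coef0.
Qed.

Lemma pade_type0 b N X : ~ pade 0 b N X.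
Proof. by case=> C [P [nzC]]; rewrite leqn0 size_poly_eq0 (negPf nzC). Qed.

End PadeRelations.

Section TruncatedInverse.
Context {F : fieldType}.
Implicit Types (X Y : {poly F}) (s p : seq F) (c : F).

(* A series with nonzero constant term x0 is invertible modulo t^N:
   X = x0 (1 - Y) with Y`_0 = 0, and x0^-1 (1 + Y + ... + Y^(N-1)) inverts it
   since Y^N = 0 mod t^N. *)
Definition inv_trunc X (N : nat) :=
  (X`_0)^-1 *: \sum_(k < N) (1 - (X`_0)^-1 *: X) ^+ k.

Lemma inv_truncP {X} N : X`_0 != 0 -> eqXn N (X * inv_trunc X N) 1.
Proof.
move=> nz; set x0 := X`_0; set Y := 1 - x0^-1 *: X.
have eX : x0^-1 *: X = 1 - Y by rewrite /Y opprB addrC subrK.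
have -> : X * inv_trunc X N = 1 - Y ^+ N.
  rewrite /inv_trunc -/x0 -/Y -scalerAr scalerAl eX.
  by rewrite -opprB mulNr -subrX1 opprB.
have Y0 : Y`_0 = 0 by rewrite /Y coefB coef1 coefZ mulVf // subrr.
have -> : Y = drop_poly 1 Y * 'X.
  rewrite -[LHS](poly_take_drop 1) -[RHS]add0r; congr (_ + _).
  by apply/polyP => i; rewrite coef_take_poly coef0; case: i => [|i] //; rewrite Y0.
by rewrite exprMn => i hi; rewrite coefB coefMXn hi subr0.
Qed.

Definition invs s : seq F :=
  mkseq (fun i => (inv_trunc (Poly s) (size s))`_i) (size s).

Lemma size_invs s : size (invs s) = size s.
Proof. by rewrite size_mkseq. Qed.

Lemma invsP {s} : s`_0 != 0 -> eqXn (size s) (Poly s * Poly (invs s)) 1.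
Proof.
move=> nz; have nzP : (Poly s)`_0 != 0 by rewrite coef_Poly.
apply: eqXn_trans (inv_truncP (size s) nzP).
by apply: eqXn_mull => j hj; rewrite coef_Poly nth_mkseq.
Qed.

Lemma head_rcons p c : p`_0 != 0 -> (rcons p c)`_0 = p`_0.
Proof. by case: p => //=; rewrite eqxx. Qed.

Definition invs_last p c := (invs (rcons p c))`_(size p).

Lemma invs_rcons p c : p`_0 != 0 ->
  invs (rcons p c) = rcons (invs p) (invs_last p c).
Proof.
move=> nz; apply: (@eq_from_nth _ 0); first by rewrite size_rcons !size_invs size_rcons.
move=> i; rewrite size_invs size_rcons ltnS leq_eqVlt => /predU1P[->|lt].
  by rewrite nth_rcons size_invs ltnn eqxx.
rewrite nth_rcons size_invs lt -[LHS]coef_Poly -[RHS]coef_Poly.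
apply: (eqXn_inv_uniq (Poly p) _ (invsP nz) i lt).
have e : eqXn (size p) (Poly (rcons p c)) (Poly p).
  by move=> j hj; rewrite !coef_Poly nth_rcons hj.
apply: eqXn_trans (eqXn_sym (eqXn_mulr _ e)) _.
apply: eqXn_le (leqnSn _) _; rewrite -[(size p).+1](size_rcons p c).
by apply: invsP; rewrite head_rcons.
Qed.

(* Distinct new coefficients give distinct last coefficients of the inverse,
   because inverses modulo t^(|p|+1) are unique. *)
Lemma invs_last_inj p : p`_0 != 0 -> injective (invs_last p).
Proof.
move=> nz c1 c2 e.
have Pi c : eqXn (size p).+1 (Poly (invs (rcons p c)) * Poly (rcons p c)) 1.
  by rewrite mulrC -[(size p).+1](size_rcons p c); apply: invsP; rewrite head_rcons.
have E : invs (rcons p c1) = invs (rcons p c2) by rewrite !invs_rcons // e.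
have Pi1 := Pi c1; rewrite E in Pi1.
have := eqXn_inv_uniq _ Pi1 (Pi c2) (size p) (ltnSn _).
by rewrite !coef_Poly !nth_rcons ltnn eqxx.
Qed.

End TruncatedInverse.

Section ExtensionCount.
Context {T : finType}.
Implicit Types (p s t : seq T) (c : T) (P Q : pred (seq T)).

Fixpoint ext_count P (r : nat) p : nat :=
  if r is r'.+1 then (\sum_(c : T) ext_count P r' (rcons p c))%N else P p.

Lemma eq_ext_count P Q r p :
  (forall t, size t = r -> P (p ++ t) = Q (p ++ t)) ->
  ext_count P r p = ext_count Q r p.
Proof.
elim: r p => [|r IH] p h /=; first by rewrite -[p]cats0 h.
apply: eq_bigr => c _; apply: IH => t ht; rewrite cat_rcons h //=.
by rewrite ht.
Qed.

Lemma ext_count_all P r p : (forall t, size t = r -> P (p ++ t)) ->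
  ext_count P r p = (#|T| ^ r)%N.
Proof.
elim: r p => [|r IH] p h /=; first by have := h [::] erefl; rewrite cats0 => ->.
rewrite (eq_bigr (fun _ => #|T| ^ r)%N) ?sum_nat_const ?expnS // => c _.
by apply: IH => t ht; rewrite cat_rcons h //= ht.
Qed.

Lemma ext_count_none P r p : (forall t, size t = r -> ~~ P (p ++ t)) ->
  ext_count P r p = 0%N.
Proof.
elim: r p => [|r IH] p h /=; first by have := h [::] erefl; rewrite cats0 => /negbTE ->.
rewrite big1 // => c _; apply: IH => t ht; rewrite cat_rcons; apply: h.
by rewrite /= ht.
Qed.

Lemma ext_count_cons P Q r c p : (forall s, P (c :: s) = Q s) ->
  ext_count P r (c :: p) = ext_count Q r p.
Proof.
move=> h; elim: r p => [|r IH] p /=; first by rewrite h.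
by apply: eq_bigr => d _; rewrite -IH.
Qed.

(* Counting is invariant under a triangular transformation f of sequences:
   on a domain R stable under extension, f p extended by c is f p extended by
   g p c, where g p is injective, hence a permutation of the letters. *)
Lemma ext_count_triangular (f : seq T -> seq T) (g : seq T -> T -> T)
    (R : pred (seq T)) P r p :
  (forall p c, R p -> R (rcons p c)) ->
  (forall p c, R p -> f (rcons p c) = rcons (f p) (g p c)) ->
  (forall p, R p -> injective (g p)) -> R p ->
  ext_count (fun s => P (f s)) r p = ext_count P r (f p).
Proof.
move=> hR hf hg; elim: r p => [|r IH] p Rp //=.
rewrite [RHS](reindex_inj (hg p Rp)) /=.
by apply: eq_bigr => c _; rewrite IH ?hf ?hR.
Qed.

Lemma ext_count_prefix P p0 r p :
  ext_count (fun s => (take (size p + size p0) s == p ++ p0) && P s)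
    (size p0 + r) p = ext_count P r (p ++ p0).
Proof.
elim: p0 p => [|c p0 IH] p /=.
  rewrite cats0; apply: eq_ext_count => t _.
  by rewrite addn0 take_size_cat // eqxx.
rewrite (bigD1 c) //= big1 ?addn0; last first.
  move=> d ndc; apply: ext_count_none => t _; apply/negP => /andP[/eqP e _].
  move/eqP: ndc; apply; have := congr1 (nth d ^~ (size p)) e.
  rewrite nth_take ?addnS ?ltnS ?leq_addr // nth_cat size_rcons ltnSn.
  by rewrite nth_rcons ltnn eqxx nth_cat ltnn subnn.
rewrite -cat_rcons -IH; apply: eq_ext_count => t _.
by rewrite size_rcons addSnnS cat_rcons.
Qed.

Lemma sum_tupleS r (G : r.+1.-tuple T -> nat) :
  (\sum_(t : r.+1.-tuple T) G t =
   \sum_(c : T) \sum_(t : r.-tuple T) G [tuple of c :: t])%N.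
Proof.
rewrite pair_big /= (reindex (fun ct : T * r.-tuple T => [tuple of ct.1 :: ct.2])) //=.
exists (fun t : r.+1.-tuple T => (thead t, [tuple of behead t])) => [[c t]|t] _.
  by congr (_, _); apply: val_inj.
by rewrite [RHS]tuple_eta.
Qed.

Lemma card_ext_count P r p :
  #|[set t : r.-tuple T | P (p ++ t)]| = ext_count P r p.
Proof.
rewrite -sum1dep_card big_mkcond /=; elim: r p => [|r IH] p /=.
  rewrite (eq_bigr (fun _ => P p : nat)) => [|t _]; last by rewrite tuple0 cats0.
  by rewrite sum_nat_const card_tuple mul1n.
rewrite sum_tupleS; apply: eq_bigr => c _; rewrite -IH.
by apply: eq_bigr => t _; rewrite cat_rcons.
Qed.

End ExtensionCount.

Section PadeCount.
Context {F : finFieldType}.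
Local Notation q := #|F|.
Implicit Types (p s t : seq F) (c : F).

Definition padeb (a b N : nat) s : bool := `[< pade a b N (Poly s) >].

Lemma padeb_cons a b N c s : (a <= b)%N -> (0 < N)%N ->
  padeb a b N (c :: s) = padeb a b.-1 N.-1 s.
Proof.
move=> hab hN; apply: asbool_equiv_eq.
by rewrite /= cons_poly_def pade_addC //; apply: pade_mulX.
Qed.

Lemma padeb_cons0 a b N s : (0 < N)%N ->
  padeb a b N (0 :: s) = padeb a b.-1 N.-1 s.
Proof.
move=> hN; apply: asbool_equiv_eq.
by rewrite /= cons_poly_def polyC0 addr0; apply: pade_mulX.
Qed.

Lemma padeb_invs a b N s : size s = N -> s`_0 != 0 -> (a <= N)%N -> (b <= N)%N ->
  padeb a b N s = padeb b a N (invs s).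
Proof.
move=> hs nz ha hb; apply: asbool_equiv_eq; apply: pade_inv => //.
by rewrite -hs; apply: invsP.
Qed.

Definition pade_count_at (N : nat) : Prop :=
  forall a b p, (0 < a)%N -> (a + b <= N.+1)%N -> (size p <= b)%N ->
  ext_count (padeb a b N) (N - size p) p = (q ^ (a + b - 1 - size p))%N.

Section InductionStep.
Variable N : nat.
Hypothesis IH : pade_count_at N.

Lemma pade_count_le a b p : (0 < a)%N -> (a <= b)%N -> (a + b <= N.+2)%N ->
  (0 < size p <= b)%N ->
  ext_count (padeb a b N.+1) (N.+1 - size p) p = (q ^ (a + b - 1 - size p))%N.
Proof.
case: b => [|b]; case: p => [|c p] //= ha hab habN hp.
rewrite (ext_count_cons _ (padeb a b N)) => [|s]; last exact: padeb_cons.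
rewrite subSS IH; [congr (_ ^ _)%N | | |]; lia.
Qed.

Lemma pade_count_gt a b p : (0 < b < a)%N -> (a + b <= N.+2)%N ->
  (0 < size p <= b)%N ->
  ext_count (padeb a b N.+1) (N.+1 - size p) p = (q ^ (a + b - 1 - size p))%N.
Proof.
case: b => [|b]; case: p => [|c p] //= hab habN hp.
have [->|nzc] := eqVneq c 0.
  rewrite (ext_count_cons _ (padeb a b N)) => [|s]; last exact: padeb_cons0.
  rewrite subSS IH; [congr (_ ^ _)%N | | |]; lia.
rewrite (eq_ext_count _ (fun s => padeb b.+1 a N.+1 (invs s))) => [|t ht]; last first.
  by apply: padeb_invs => //=; rewrite ?size_cat ?ht /=; lia.
rewrite (ext_count_triangular invs invs_last (fun s => s`_0 != 0)) //; first last.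
- exact: invs_last_inj.
- exact: invs_rcons.
- by move=> s d nz; rewrite head_rcons.
have sz : (size p).+1 = size (invs (c :: p)) by rewrite size_invs.
rewrite [in (N.+1 - _)%N]sz pade_count_le -?sz;
  [congr (_ ^ _)%N | | | |]; lia.
Qed.

Lemma pade_count_nonempty a b p : (0 < a)%N -> (0 < b)%N -> (a + b <= N.+2)%N ->
  (0 < size p <= b)%N ->
  ext_count (padeb a b N.+1) (N.+1 - size p) p = (q ^ (a + b - 1 - size p))%N.
Proof.
move=> ha hb habN hp; case: (leqP a b) => hab; first exact: pade_count_le.
by apply: pade_count_gt; rewrite ?hb.
Qed.

End InductionStep.

(* Empty prefix and b = 0: if a = N + 2 every sequence qualifies; otherwise
   the first term must vanish, since inverting the series would give a
   relation of type (0, a). *)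
Lemma pade_count_b0 N : pade_count_at N -> forall a, (0 < a <= N.+2)%N ->
  ext_count (padeb a 0 N.+1) N.+1 [::] = (q ^ (a - 1))%N.
Proof.
move=> IH a /andP[ha haN]; case: (ltnP N.+1 a) => haN'.
  have -> : a = N.+2 by lia.
  by rewrite ext_count_all // => t _; apply/asboolP; apply: pade_full.
rewrite /= (bigD1 0) //= big1 ?addn0 => [|c nzc]; last first.
  apply: ext_count_none => t ht /=; rewrite (padeb_invs a 0) /= ?ht //.
  by rewrite /padeb asboolF //; apply: pade_type0.
rewrite (ext_count_cons _ (padeb a 0 N)) => [|s]; last exact: padeb_cons0.
by have := IH a 0 [::] ha; rewrite !subn0 addn0 => ->.
Qed.

Theorem pade_count N : pade_count_at N.
Proof.
elim: N => [|N IH] a b p ha habN hp.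
  case: p hp => [_|c p /= hp]; last by lia.
  have [-> ->] : a = 1%N /\ b = 0%N by lia.
  by rewrite ext_count_all // => t _; apply/asboolP; apply: pade_full.
case: b habN hp => [|b] habN hp.
  case: p hp => [_|//]; rewrite (subn0 N.+1) pade_count_b0 ?subn0 ?addn0 //.
  by rewrite ha -(addn0 a).
case: p hp => [|c p] hp; last by apply: pade_count_nonempty => //=; lia.
rewrite subn0 /= (eq_bigr (fun _ => q ^ (a + b.+1 - 1 - 1))%N) => [|c _].
  by rewrite sum_nat_const -expnS; congr (_ ^ _)%N; lia.
have := @pade_count_nonempty N IH a b.+1 [:: c] ha isT habN isT.
by rewrite /= subSS subn0 => ->.
Qed.

End PadeCount.

Section FinSeq.
Context {T : eqType}.

Definition fseq {N : nat} (x : 'I_N -> T) : seq T := val [tuple x i | i < N].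

Lemma size_fseq {N} (x : 'I_N -> T) : size (fseq x) = N.
Proof. exact: size_tuple. Qed.

Lemma nth_fseq {N} (x : 'I_N -> T) x0 (i : 'I_N) : nth x0 (fseq x) i = x i.
Proof. by rewrite /fseq -tnth_nth tnth_mktuple. Qed.

Lemma nth_fseq_inord {N} (x : 'I_N.+1 -> T) x0 l : (l <= N)%N ->
  nth x0 (fseq x) l = x (inord l).
Proof.
move=> hl; rewrite (nth_fseq _ _ (Ordinal (hl : (l < N.+1)%N))); congr (x _).
by apply: val_inj; rewrite /= inordK.
Qed.

Lemma prefix_fseq N k (x : 'I_N.+1 -> T) (a : 'I_k -> T) : (k <= N.+1)%N ->
  [forall i : 'I_k, x (inord i) == a i] = (take k (fseq x) == fseq a).
Proof.
move=> hk; have nth_x i : (i < k)%N -> nth (x ord0) (take k (fseq x)) i = x (inord i).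
  by move=> hi; rewrite nth_take // nth_fseq_inord // -ltnS (leq_trans hi hk).
apply/forallP/eqP => [h | e i].
  apply: (@eq_from_nth _ (x ord0)); first by rewrite size_takel ?size_fseq.
  move=> i; rewrite size_takel ?size_fseq // => hi.
  by rewrite nth_x // (nth_fseq _ _ (Ordinal hi)); apply/eqP/(h (Ordinal hi)).
by rewrite -nth_x // e nth_fseq.
Qed.

End FinSeq.

Lemma card_ffun_fseq (T : finType) N (Q : pred (seq T)) :
  #|[set x : {ffun 'I_N -> T} | Q (fseq x)]| = #|[set t : N.-tuple T | Q t]|.
Proof.
pose f (x : {ffun 'I_N -> T}) := [tuple x i | i < N].
pose g (t : N.-tuple T) := [ffun i => tnth t i].
have fK : cancel f g by move=> x; apply/ffunP => i; rewrite ffunE tnth_mktuple.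
have gK : cancel g f by move=> t; apply: eq_from_tnth => i; rewrite tnth_mktuple ffunE.
rewrite -(card_imset _ (can_inj fK)) (can2_imset_pre _ fK gK).
by apply: eq_card => t; rewrite !inE /fseq -/(f (g t)) gK.
Qed.

Lemma rank_le_dependent (F : fieldType) m n (A : 'M[F]_(m.+1, n)) :
  reflect (exists2 c : 'rV_m.+1, c != 0 & c *m A = 0) (\rank A <= m)%N.
Proof.
have -> : (\rank A <= m)%N = (kermx A != 0).
  by rewrite kermx_eq0 /row_free eqn_leq rank_leq_row /= -ltnNge ltnS.
apply: (iffP rowV0Pn) => -[c].
  by move=> /sub_kermxP hc nz; exists c.
by move=> nz /sub_kermxP hc; exists c.
Qed.

Section HankelPade.
Context {F : fieldType} (m n : nat).
Local Notation N := (m + n).+1.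

Definition rev_poly (c : 'rV[F]_m.+1) : {poly F} :=
  \poly_(i < m.+1) c 0 (inord (m - i)).

Lemma coef_rev_poly c (l : 'I_m.+1) : (rev_poly c)`_(m - l) = c 0 l.
Proof.
have hl := ltn_ord l; rewrite coef_poly ifT; last by lia.
by congr (c 0 _); apply: val_inj; rewrite /= inordK; lia.
Qed.

Lemma rev_poly_eq0 c : (rev_poly c == 0) = (c == 0).
Proof.
apply/eqP/eqP => [c0 | ->]; last first.
  by apply/polyP => i; rewrite coef_poly coef0 mxE; case: ifP.
by apply/rowP => l; rewrite -coef_rev_poly c0 coef0 mxE.
Qed.

Lemma rev_polyK (C : {poly F}) : (size C <= m.+1)%N -> rev_poly (\row_l C`_(m - l)) = C.
Proof.
move=> sC; apply/polyP => i; rewrite coef_poly; case: ltnP => hi.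
  by rewrite mxE inordK; [congr (C`_ _) | ]; lia.
by rewrite nth_default // (leq_trans sC).
Qed.

Lemma hankel_coef (x : 'I_N -> F) (c : 'rV[F]_m.+1) (j : 'I_n.+1) :
  (c *m hankel x) 0 j = (rev_poly c * Poly (fseq x))`_(m + j).
Proof.
rewrite mxE coefM [RHS](bigID (fun i : 'I_ _ => (i < m.+1)%N)) /=.
rewrite [X in _ + X]big1 ?addr0 => [|i]; last first.
  by rewrite -leqNgt => h; rewrite /rev_poly coef_poly ltnNge h mul0r.
rewrite -(big_ord_widen _ (fun i => (rev_poly c)`_i * (Poly (fseq x))`_(m + j - i))).
  2: by rewrite ltnS leq_addr.
rewrite [RHS](reindex_inj rev_ord_inj) /=; apply: eq_bigr => i _.
have hj := ltn_ord j; have hi := ltn_ord i.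
rewrite subSS coef_rev_poly coef_Poly nth_fseq_inord; last by lia.
by rewrite mxE; congr (_ * x (inord _)); lia.
Qed.

Lemma rank_hankel_pade (x : 'I_N -> F) :
  (\rank (hankel x) <= m)%N <-> pade m.+1 m N (Poly (fseq x)).
Proof.
split=> [/rank_le_dependent[c nzc hc] | [C [P [nzC sC sP e]]]].
  exists (rev_poly c), (take_poly m (rev_poly c * Poly (fseq x))); split.
  - by rewrite rev_poly_eq0.
  - exact: size_poly.
  - exact: size_take_poly.
  move=> k hk; rewrite coef_take_poly; case: ltnP => // hmk.
  have hj : (k - m < n.+1)%N by lia.
  by have := hankel_coef x c (Ordinal hj); rewrite hc mxE /= subnKC.
apply/rank_le_dependent; exists (\row_l C`_(m - l)).
  by rewrite -rev_poly_eq0 rev_polyK.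
apply/rowP => j; have hj := ltn_ord j.
rewrite hankel_coef rev_polyK // e ?mxE; last by lia.
by rewrite nth_default // (leq_trans sP) // leq_addr.
Qed.

End HankelPade.

Theorem lemma16 (F : finFieldType) (k m n : nat) (hkm : (k <= m)%N)
  (hmn : (m <= n.+1)%N) (a : 'I_k -> F) :
  #|[set x : {ffun 'I_(m + n).+1 -> F} |
      [forall i : 'I_k, x (inord i) == a i] &&
      (\rank (hankel x) <= m)%N]| = (#|F| ^ (2 * m - k))%N.
Proof.
pose N := (m + n).+1.
pose Q s := (take k s == fseq a) && padeb m.+1 m N s.
have -> : [set x : {ffun 'I_N -> F} | [forall i : 'I_k, x (inord i) == a i] &&
      (\rank (hankel x) <= m)%N] = [set x : {ffun 'I_N -> F} | Q (fseq x)].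
  apply/setP => x; rewrite !inE prefix_fseq; last by lia.
  congr andb; apply/esym/(asbool_equiv_eqP idP).
  by apply: iff_sym; apply: rank_hankel_pade.
have E := ext_count_prefix (padeb m.+1 m N) (fseq a) (N - k) [::].
rewrite size_fseq subnKC in E; last by lia.
rewrite card_ffun_fseq; transitivity (ext_count Q N [::]); first exact: card_ext_count.
transitivity (ext_count (padeb m.+1 m N) (N - k) (fseq a)); first exact: E.
rewrite -{1}(size_fseq a) pade_count ?size_fseq //; first by congr (_ ^ _)%N; lia.
by rewrite /N; lia.
Qed.
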